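(* Let $P$ be a finite poset and $q$ a positive integer such that every chain of $P$ has at most $q$ elements. Then the restriction function $R(p)=\{k\in\mathbb{Z}:1+\delta(p)\le k\le q-\nu(p)\}$ is consistent.
   Context: For $p\in P$, $\delta(p)$ is the number of elements less than $p$ in a chain of maximum size containing $p$, and $\nu(p)$ is the number of elements greater than $p$ in such a chain. A restriction function assigns to each $p$ a nonempty finite subset of $\mathbb{Z}$; it is consistent if for every cover $x\lessdot y$ in $P$, $\min R(x)<\min R(y)$ and $\max R(x)<\max R(y)$. *)

From HB Require Import structures.
From mathcomp Require Import all_boot all_order all_algebra.
From mathcomp Require Import finmap.
Set Implicit Arguments. Unset Strict Implicit. Unset Printing Implicit Defensive.
Import Order.TTheory GRing.Theory Num.Theory.

Local Open Scope order_scope.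

Section Poset.
Context {d : Order.disp_t} {P : finPOrderType d}.

Definition is_chain (C : {set P}) : bool :=
  [forall x in C, forall y in C, (x <= y) || (y <= x)].

Definition covers (x y : P) : bool :=
  (x < y) && [forall z, ~~ ((x < z) && (z < y))].

(* a chain of maximum size among the chains containing p
   (the singleton [set p] is such a chain, used as witness) *)
Definition max_chain_through (p : P) : {set P} :=
  [arg max_(C > [set p] | is_chain C && (p \in C)) #|C|]%N.

Definition delta (p : P) : nat := #|[set x in max_chain_through p | x < p]|.
Definition nu (p : P) : nat := #|[set x in max_chain_through p | p < x]|.

End Poset.

Local Open Scope ring_scope.
Local Open Scope fset_scope.

Definition restriction_function {d : Order.disp_t} {P : finPOrderType d}
  (R : P -> {fset int}) : Prop := forall p, R p != fset0.

Definition is_min_of (S : {fset int}) (m : int) : Prop :=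
  m \in S /\ forall k, k \in S -> m <= k.
Definition is_max_of (S : {fset int}) (m : int) : Prop :=
  m \in S /\ forall k, k \in S -> k <= m.

Definition consistent {d : Order.disp_t} {P : finPOrderType d}
  (R : P -> {fset int}) : Prop :=
  forall x y : P, covers x y ->
    (forall mx my, is_min_of (R x) mx -> is_min_of (R y) my -> mx < my) /\
    (forall Mx My, is_max_of (R x) Mx -> is_max_of (R y) My -> Mx < My).

(* The interval R(p) = [1 + delta p, q - nu p] is nonempty because a maximum
   chain through p has delta p + nu p + 1 <= q elements.  For x < y, the part of
   a maximum chain through x lying below x, glued to the part of a maximum chain
   through y lying above y, is a chain through both x and y with
   delta x + nu y + 2 elements; comparing with the maximum chains through x and
   through y gives delta x < delta y and nu y < nu x, i.e. both endpoints of the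
   interval strictly increase along every cover. *)

From HB Require Import structures.
From mathcomp Require Import all_boot all_order all_algebra.
From mathcomp Require Import finmap.
From mathcomp Require Import zify.

Set Implicit Arguments.
Unset Strict Implicit.
Unset Printing Implicit Defensive.

Import Order.TTheory GRing.Theory Num.Theory.

Section Chains.
Context {d : Order.disp_t} {P : finPOrderType d}.
Local Open Scope order_scope.

Lemma chainP (C : {set P}) :
  reflect {in C &, forall x y, (x <= y) || (y <= x)} (is_chain C).
Proof.
apply: (iffP forall_inP) => [H x y xC yC|H x xC].
  by move/forall_inP: (H x xC); apply.
by apply/forall_inP => y yC; apply: H.
Qed.

Lemma cards_sep_le (C : {set P}) (p : P) : p \in C ->
  #|[set x in C | x <= p]| = #|[set x in C | x < p]|.+1.
Proof.
move=> pC; have -> : [set x in C | x <= p] = p |: [set x in C | x < p].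
  apply/setP => x; rewrite !inE le_eqVlt.
  by case: (eqVneq x p) => [->|_] /=; rewrite ?pC.
by rewrite cardsU1 !inE ltxx andbF.
Qed.

Lemma cards_sep_ge (C : {set P}) (p : P) : p \in C ->
  #|[set x in C | p <= x]| = #|[set x in C | p < x]|.+1.
Proof.
move=> pC; have -> : [set x in C | p <= x] = p |: [set x in C | p < x].
  apply/setP => x; rewrite !inE le_eqVlt eq_sym.
  by case: (eqVneq x p) => [->|_] /=; rewrite ?pC.
by rewrite cardsU1 !inE ltxx andbF.
Qed.

Lemma card_chain_split (C : {set P}) (p : P) : is_chain C -> p \in C ->
  #|C| = (#|[set x in C | x < p]| + #|[set x in C | p < x]|).+1.
Proof.
move=> /chainP chC pC; rewrite (cardsD1 p) pC add1n.
have -> : C :\ p = [set x in C | x < p] :|: [set x in C | p < x].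
  apply/setP => x; rewrite !inE; case xC: (x \in C); rewrite ?andbF //=.
  have /comparable_ltgtP : x >=< p by apply: chC.
  by case.
rewrite cardsU; set I := _ :&: _; suff -> : I = set0 by rewrite cards0 subn0.
apply/setP => x; rewrite !inE; apply/negbTE/negP => /and3P[/andP[_ xp] _ px].
by have := lt_trans xp px; rewrite ltxx.
Qed.

Lemma chain_glue (C D : {set P}) (x y : P) : is_chain C -> is_chain D -> x <= y ->
  is_chain ([set z in C | z <= x] :|: [set z in D | y <= z]).
Proof.
move=> /chainP chC /chainP chD xy; apply/chainP => a b; rewrite !inE.
case/orP=> /andP[aC ax]; case/orP=> /andP[bC bx].
- exact: chC.
- by rewrite (le_trans ax (le_trans xy bx)).
- by rewrite (le_trans bx (le_trans xy ax)) orbT.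
- exact: chD.
Qed.

Lemma card_chain_glue (C D : {set P}) (x y : P) : x \in C -> y \in D -> x < y ->
  #|[set z in C | z <= x] :|: [set z in D | y <= z]| =
  (#|[set z in C | z < x]| + #|[set z in D | y < z]|).+2.
Proof.
move=> xC yD xy; rewrite cardsU; set I := _ :&: _.
suff -> : I = set0 by rewrite cards0 subn0 cards_sep_le // cards_sep_ge // addSn addnS.
apply/setP => z; rewrite !inE; apply/negbTE/negP => /andP[/andP[_ zx] /andP[_ yz]].
by have := lt_le_trans xy (le_trans yz zx); rewrite ltxx.
Qed.

End Chains.

Section MaxChain.
Context {d : Order.disp_t} {P : finPOrderType d}.
Local Open Scope order_scope.

Lemma max_chain_throughP (p : P) :
  [/\ is_chain (max_chain_through p), p \in max_chain_through p &
      forall C, is_chain C -> p \in C -> (#|C| <= #|max_chain_through p|)%N].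
Proof.
rewrite /max_chain_through; case: arg_maxnP => [|C /andP[chC pC] Cmax].
  rewrite set11 andbT; apply/chainP => x y; rewrite !inE => /eqP-> /eqP->.
  by rewrite lexx.
by split=> // C' chC' pC'; apply: Cmax; rewrite chC' pC'.
Qed.

Lemma card_max_chain_through (p : P) :
  #|max_chain_through p| = (delta p + nu p).+1.
Proof. by have [chC pC _] := max_chain_throughP p; rewrite (card_chain_split chC pC). Qed.

Lemma card_glue_max_chain_through (x y : P) : x < y ->
  ((delta x + nu y).+2 <= (delta x + nu x).+1)%N /\
  ((delta x + nu y).+2 <= (delta y + nu y).+1)%N.
Proof.
move=> xy; have [chCx xCx Cxmax] := max_chain_throughP x.
have [chCy yCy Cymax] := max_chain_throughP y.
have chG := chain_glue chCx chCy (ltW xy).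
have cardG := card_chain_glue xCx yCy xy; rewrite -/(delta x) -/(nu y) in cardG.
rewrite -!card_max_chain_through -cardG.
split; [apply: Cxmax | apply: Cymax]; rewrite // !inE ?xCx ?yCy lexx ?orbT //.
Qed.

Lemma delta_lt (x y : P) : x < y -> (delta x < delta y)%N.
Proof. by move/card_glue_max_chain_through => [_]; rewrite ltnS ltn_add2r. Qed.

Lemma nu_lt (x y : P) : x < y -> (nu y < nu x)%N.
Proof. by move/card_glue_max_chain_through => [+ _]; rewrite ltnS ltn_add2l. Qed.

Lemma delta_nu_bound (q : nat) :
  (forall C : {set P}, is_chain C -> (#|C| <= q)%N) ->
  forall p : P, ((delta p + nu p).+1 <= q)%N.
Proof.
move=> chain_le p; have [chC _ _] := max_chain_throughP p.
by rewrite -card_max_chain_through chain_le.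
Qed.

End MaxChain.

Section Intervals.
Local Open Scope ring_scope.
Variables (S : {fset int}) (a b : int).
Hypothesis memS : forall k, (k \in S) = (a <= k <= b).
Hypothesis le_ab : a <= b.

Lemma is_min_of_itv m : is_min_of S m -> m = a.
Proof.
case; rewrite memS => /andP[am _] /(_ a); rewrite memS lexx le_ab => /(_ isT) ma.
by apply/eqP; rewrite eq_le ma am.
Qed.

Lemma is_max_of_itv m : is_max_of S m -> m = b.
Proof.
case; rewrite memS => /andP[_ mb] /(_ b); rewrite memS lexx le_ab => /(_ isT) bm.
by apply/eqP; rewrite eq_le mb bm.
Qed.

Lemma itv_neq0 : S != fset0.
Proof. by apply/fset0Pn; exists a; rewrite memS lexx le_ab. Qed.

End Intervals.

Local Open Scope ring_scope.

Theorem lemma2p18 (d : Order.disp_t) (P : finPOrderType d) (q : nat)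
  (q_pos : (0 < q)%N)
  (chains_bounded : forall C : {set P}, is_chain C -> (#|C| <= q)%N)
  (R : P -> {fset int})
  (R_def : forall (p : P) (k : int),
     k \in R p = ((1 + (delta p)%:Z <= k) && (k <= q%:Z - (nu p)%:Z))) :
  restriction_function R /\ consistent R.
Proof.
have R_le (p : P) : 1 + (delta p)%:Z <= q%:Z - (nu p)%:Z.
  by have := delta_nu_bound chains_bounded p; lia.
split=> [p | x y /andP[xy _]]; first exact: itv_neq0 (R_def p) (R_le p).
split=> [mx my | Mx My].
- move=> /(is_min_of_itv (R_def x) (R_le x)) -> /(is_min_of_itv (R_def y) (R_le y)) ->.
  by rewrite ltrD2l ltz_nat delta_lt.
- move=> /(is_max_of_itv (R_def x) (R_le x)) -> /(is_max_of_itv (R_def y) (R_le y)) ->.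
  by rewrite ltrD2l ltrN2 ltz_nat nu_lt.
Qed.
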